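(* Let $L$ be a $\kappa$-frame. The following are equivalent: (1) $L$ is d-reduced; (2) the map $g\colon L\to \mathfrak{H}_\kappa L/\mathfrak{D}_{\mathfrak{H}_\kappa L}$, $a\mapsto[\downarrow a]$ (the composite of $a\mapsto\downarrow a$ with the quotient map) is injective; (3) $L$ is isomorphic to a sub-$\kappa$-frame of some Boolean frame $B$ (a subset closed under finite meets and joins of subsets of cardinality $<\kappa$ computed in $B$) which generates $B$ under arbitrary joins.
   Context: $\kappa$ is a fixed regular cardinal; a $\kappa$-frame is a bounded distributive lattice having joins of all subsets of cardinality $<\kappa$ and satisfying the frame distributive law for such joins; a frame is a complete lattice satisfying the infinite distributive law, and a Boolean frame is a complete Boolean algebra. A $\kappa$-ideal is a downset in which every subset of cardinality $<\kappa$ has an upper bound; $\mathfrak{H}_\kappa L$ is the frame of $\kappa$-ideals under inclusion; $\downarrow a=\{x\mid x\le a\}$. For a $\kappa$-frame (or frame) $M$, $\mathfrak{D}_M=\{(a,b)\mid\forall x\in M:\ a\wedge x=0\iff b\wedge x=0\}$, a congruence (equivalence relation that is a sub-$\kappa$-frame, resp. subframe, of $M\times M$); $M/\mathfrak{D}_M$ is the quotient. $M$ is d-reduced if $\mathfrak{D}_M$ is the diagonal. *)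

From Stdlib Require Import Classical.
Set Implicit Arguments.

Definition injective_fun {A B : Type} (f : A -> B) := forall x y, f x = f y -> x = y.

Definition lt_card (A K : Type) : Prop :=
  (exists f : A -> K, injective_fun f) /\ ~ (exists g : K -> A, injective_fun g).

(* kappa = |K| is an (infinite) regular cardinal *)
Definition regular_card (K : Type) : Prop :=
  (exists f : nat -> K, injective_fun f) /\
  (forall (I : Type) (A : I -> Type),
      lt_card I K -> (forall i, lt_card (A i) K) -> lt_card {i : I & A i} K).

Definition small (K : Type) {X : Type} (S : X -> Prop) : Prop := lt_card {x : X | S x} K.

Definition is_ub {X : Type} (le : X -> X -> Prop) (S : X -> Prop) (x : X) :=
  forall s, S s -> le s x.
Definition is_lub {X : Type} (le : X -> X -> Prop) (S : X -> Prop) (x : X) :=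
  is_ub le S x /\ forall y, is_ub le S y -> le x y.

Record KFrame (K : Type) := {
  kcar :> Type;
  kle : kcar -> kcar -> Prop;
  kle_refl : forall a, kle a a;
  kle_trans : forall a b c, kle a b -> kle b c -> kle a c;
  kle_antisym : forall a b, kle a b -> kle b a -> a = b;
  kmeet : kcar -> kcar -> kcar;
  kmeet_glb : forall a b c, kle c (kmeet a b) <-> (kle c a /\ kle c b);
  ktop : kcar;
  ktop_max : forall a, kle a ktop;
  kbot : kcar;
  kbot_min : forall a, kle kbot a;
  kjoin_ex : forall S : kcar -> Prop, small K S -> exists x, is_lub kle S x;
  kdistr : forall (a : kcar) (S : kcar -> Prop) (x : kcar), small K S -> is_lub kle S x ->
      is_lub kle (fun y => exists s, S s /\ y = kmeet a s) (kmeet a x)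
}.

Section KF.
Variables (K : Type) (L : KFrame K).

Definition Drel (a b : L) : Prop :=
  forall x : L, kmeet L a x = kbot L <-> kmeet L b x = kbot L.
Definition d_reduced : Prop := forall a b : L, Drel a b -> a = b.

Definition is_kideal (I : L -> Prop) : Prop :=
  (forall a b, kle L a b -> I b -> I a) /\
  (forall S : L -> Prop, small K S -> (forall s, S s -> I s) -> exists u, I u /\ is_ub (kle L) S u).

Definition down (a : L) : L -> Prop := fun x => kle L x a.

(* set equality of subsets of L (= equality of ideals as elements of H_kappa L) *)
Definition seteq (I J : L -> Prop) : Prop := forall x, I x <-> J x.

(* In the frame H_kappa L: meet is intersection, bottom is the ideal {0} = down 0.
   D_{H_kappa L}(I, J) <-> for every kappa-ideal X, I /\ X = 0 iff J /\ X = 0. *)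
Definition Drel_H (I J : L -> Prop) : Prop :=
  forall X : L -> Prop, is_kideal X ->
    (seteq (fun x => I x /\ X x) (down (kbot L)) <->
     seteq (fun x => J x /\ X x) (down (kbot L))).

(* g : a |-> [down a] in H_kappa L / D is injective: [down a] = [down b] means (down a, down b) in D *)
Definition g_injective : Prop := forall a b : L, Drel_H (down a) (down b) -> a = b.
End KF.

Record BFrame := {
  bcar :> Type;
  ble : bcar -> bcar -> Prop;
  ble_refl : forall a, ble a a;
  ble_trans : forall a b c, ble a b -> ble b c -> ble a c;
  ble_antisym : forall a b, ble a b -> ble b a -> a = b;
  bmeet : bcar -> bcar -> bcar;
  bmeet_glb : forall a b c, ble c (bmeet a b) <-> (ble c a /\ ble c b);
  btop : bcar;
  btop_max : forall a, ble a btop;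
  bbot : bcar;
  bbot_min : forall a, ble bbot a;
  bjoin : (bcar -> Prop) -> bcar;
  bjoin_lub : forall S, is_lub ble S (bjoin S);
  bdistr : forall a S, bmeet a (bjoin S) = bjoin (fun y => exists s, S s /\ y = bmeet a s);
  bcompl : forall a, exists c, bmeet a c = bbot /\ bjoin (fun y => y = a \/ y = c) = btop
}.

Definition sub_kframe (K : Type) (B : BFrame) (M : B -> Prop) : Prop :=
  M (btop B) /\
  (forall a b, M a -> M b -> M (bmeet B a b)) /\
  (forall S : B -> Prop, small K S -> (forall s, S s -> M s) -> M (bjoin B S)).

Definition join_generates (B : BFrame) (M : B -> Prop) : Prop :=
  forall b : B, exists S : B -> Prop, (forall s, S s -> M s) /\ b = bjoin B S.

Definition boolean_repr (K : Type) (L : KFrame K) : Prop :=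
  exists (B : BFrame) (M : B -> Prop) (f : L -> B),
    sub_kframe K B M /\ join_generates B M /\
    (forall a, M (f a)) /\ (forall y, M y -> exists a, f a = y) /\
    (forall a b, kle L a b <-> ble B (f a) (f b)).

From Stdlib Require Import FunctionalExtensionality PropExtensionality ProofIrrelevance.
Set Implicit Arguments.

(* For a kappa-ideal X, the meet of [down a] and X is the zero ideal iff a is
   disjoint from every element of X; testing against principal ideals [down x]
   shows that D on H_kappa L restricts to D_L, which gives (1) <-> (2).
   For (1) -> (3), take B to be the complete Boolean algebra of polars
   X = X^perp^perp of L and send a to {a}^perp^perp: this preserves finite meets,
   preserves small joins by the frame distributive law, and reflects the order
   exactly when L is d-reduced.  For (3) -> (1), if a D b and c is the complement
   of b in B, then c is a join of elements of L disjoint from b, hence from a,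
   so a /\ c = 0 and a <= b. *)

Lemma regular_card_inhabited (K : Type) : regular_card K -> inhabited K.
Proof. intros [[f _] _]; exact (inhabits (f 0)). Qed.

Lemma lt_card_inj (A B K : Type) (h : A -> B) :
  injective_fun h -> lt_card B K -> lt_card A K.
Proof.
  intros Hh [[f Hf] HnK]. split.
  - exists (fun a => f (h a)). intros x y E; apply Hh, Hf, E.
  - intros [g Hg]; apply HnK. exists (fun k => h (g k)). intros x y E; apply Hg, Hh, E.
Qed.

Lemma small_set0 (K X : Type) : inhabited K -> small K (fun _ : X => False).
Proof.
  intros [k]. split.
  - exists (fun p : {x : X | False} => match proj2_sig p with end). intros [x []].
  - intros [g _]. destruct (g k) as [x []].
Qed.

Lemma small_preimage (K X Y : Type) (h : X -> Y) (S : Y -> Prop) :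
  injective_fun h -> small K S -> small K (fun x => S (h x)).
Proof.
  intros Hh.
  apply lt_card_inj
    with (h := fun p : {x | S (h x)} => exist S (h (proj1_sig p)) (proj2_sig p)).
  intros [x Hx] [y Hy] E. apply (f_equal (@proj1_sig _ _)), Hh in E; simpl in E.
  subst; f_equal; apply proof_irrelevance.
Qed.

Section KFrameTheory.
Variables (K : Type) (L : KFrame K).
Local Notation le := (kle L).
Local Notation meet := (kmeet L).
Local Notation bot := (kbot L).

Lemma kmeet_lel a b : le (meet a b) a.
Proof. exact (proj1 (proj1 (kmeet_glb L a b _) (kle_refl L _))). Qed.
Lemma kmeet_ler a b : le (meet a b) b.
Proof. exact (proj2 (proj1 (kmeet_glb L a b _) (kle_refl L _))). Qed.
Lemma kmeet_greatest a b c : le c a -> le c b -> le c (meet a b).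
Proof. intros; apply (kmeet_glb L); auto. Qed.

Ltac meet_le := solve [ apply kle_refl | apply kmeet_greatest; meet_le
  | eapply kle_trans; [apply kmeet_lel | meet_le]
  | eapply kle_trans; [apply kmeet_ler | meet_le] ].
Ltac meet_eq := apply kle_antisym; meet_le.

Lemma kmeetC a b : meet a b = meet b a.
Proof. meet_eq. Qed.
Lemma kmeet_idPl a b : le a b -> meet a b = a.
Proof.
  intro H; apply kle_antisym; [apply kmeet_lel | apply kmeet_greatest; auto using kle_refl].
Qed.
Lemma kmeetxx a : meet a a = a.
Proof. apply kmeet_idPl, kle_refl. Qed.
Lemma le_kbot_eq a : le a bot -> a = bot.
Proof. intro; apply kle_antisym; auto using kbot_min. Qed.
Lemma le_kbot_trans a b : le a b -> b = bot -> a = bot.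
Proof. intros H ->; apply le_kbot_eq, H. Qed.
Lemma kmeet_monor a b b' : le b b' -> le (meet a b) (meet a b').
Proof.
  intro H; apply kmeet_greatest;
    [apply kmeet_lel | eapply kle_trans; [apply kmeet_ler | exact H]].
Qed.

Lemma lub_kbot_iff (S : L -> Prop) x : is_lub le S x -> x = bot <-> forall s, S s -> s = bot.
Proof.
  intros [Hub Hleast]; split.
  - intros -> s Hs; apply le_kbot_eq, Hub, Hs.
  - intro H; apply le_kbot_eq, Hleast; intros s Hs; rewrite (H s Hs); apply kle_refl.
Qed.

Definition perp (X : L -> Prop) (y : L) : Prop := forall x, X x -> meet y x = bot.
Definition biperp (X : L -> Prop) : L -> Prop := perp (perp X).

Lemma perp_antimono (X Y : L -> Prop) :
  (forall x, X x -> Y x) -> forall y, perp Y y -> perp X y.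
Proof. unfold perp; auto. Qed.
Lemma sub_biperp X x : X x -> biperp X x.
Proof. intros Hx y Hy; rewrite kmeetC; apply Hy, Hx. Qed.
Lemma biperp_mono (X Y : L -> Prop) :
  (forall x, X x -> Y x) -> forall x, biperp X x -> biperp Y x.
Proof. intro H; apply perp_antimono, perp_antimono, H. Qed.
Lemma perp_biperp X y : perp (biperp X) y <-> perp X y.
Proof.
  split; [apply perp_antimono, sub_biperp|].
  intros Hy w Hw; rewrite kmeetC; apply Hw, Hy.
Qed.
Lemma biperp_ext (X Y : L -> Prop) :
  (forall y, perp X y <-> perp Y y) -> forall x, biperp X x <-> biperp Y x.
Proof. intros E x; split; apply perp_antimono; intro y; apply E. Qed.
Lemma perp_closed X x : biperp (perp X) x -> perp X x.
Proof. apply perp_biperp. Qed.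
Lemma biperp_closed X x : biperp (biperp X) x -> biperp X x.
Proof. apply perp_closed. Qed.
Lemma perp_downward X y y' : le y' y -> perp X y -> perp X y'.
Proof.
  intros Hle Hy x Hx; apply le_kbot_trans with (b := meet y x); [|apply Hy, Hx].
  apply kmeet_greatest; [eapply kle_trans; [apply kmeet_lel | exact Hle] | apply kmeet_ler].
Qed.
Lemma perp_kbot X : perp X bot.
Proof. intros x _; apply le_kbot_eq, kmeet_lel. Qed.
Lemma perp1 a y : perp (fun x => x = a) y <-> meet y a = bot.
Proof. split; [intro H; apply H; reflexivity | intros H x ->; exact H]. Qed.
Lemma perp_self X y : X y -> perp X y -> y = bot.
Proof. intros Hy Hp; rewrite <- (kmeetxx y); apply Hp, Hy. Qed.

Record polar := Polar {
  polar_pred :> L -> Prop;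
  polar_closed : forall x, biperp polar_pred x -> polar_pred x
}.
Arguments Polar : clear implicits.

Lemma polar_ext (P Q : polar) : (forall x, P x <-> Q x) -> P = Q.
Proof.
  destruct P as [P HP], Q as [Q HQ]; simpl; intro E.
  assert (P = Q) as <-.
  { apply functional_extensionality; intro; apply propositional_extensionality, E. }
  f_equal; apply proof_irrelevance.
Qed.

Lemma polar_downward (P : polar) x y : le y x -> P x -> P y.
Proof.
  intros Hle Hx; apply polar_closed.
  eapply perp_downward; [exact Hle | apply sub_biperp, Hx].
Qed.

Lemma polar_kbot (P : polar) : P bot.
Proof. apply polar_closed, perp_kbot. Qed.

Definition polar_le (P Q : polar) : Prop := forall x, P x -> Q x.

Definition polar_meet (P Q : polar) : polar.
Proof.
  refine (Polar (fun x => P x /\ Q x) _).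
  intros x Hx; split; apply polar_closed; revert Hx; apply biperp_mono; tauto.
Defined.

Definition polar_top : polar := Polar (fun _ => True) (fun _ _ => I).

Definition polar_bot : polar.
Proof.
  refine (Polar (fun x => x = bot) _).
  intros x Hx; apply (perp_self (X := perp (fun x => x = bot))); [|exact Hx].
  apply perp1, le_kbot_eq, kmeet_ler.
Defined.

Definition polar_join (S : polar -> Prop) : polar :=
  Polar (biperp (fun x => exists P, S P /\ P x)) (@biperp_closed _).

Definition polar_compl (P : polar) : polar := Polar (perp P) (@perp_closed P).

Lemma polar_le_refl P : polar_le P P.
Proof. intros x; auto. Qed.
Lemma polar_le_trans P Q R : polar_le P Q -> polar_le Q R -> polar_le P R.
Proof. unfold polar_le; auto. Qed.
Lemma polar_le_antisym P Q : polar_le P Q -> polar_le Q P -> P = Q.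
Proof. intros; apply polar_ext; split; auto. Qed.
Lemma polar_meet_glb P Q R : polar_le R (polar_meet P Q) <-> polar_le R P /\ polar_le R Q.
Proof.
  unfold polar_le; simpl; split.
  - intro H; split; intros x Hx; apply H, Hx.
  - intros [HP HQ] x Hx; auto.
Qed.
Lemma polar_top_max P : polar_le P polar_top.
Proof. intros x _; exact I. Qed.
Lemma polar_bot_min P : polar_le polar_bot P.
Proof. intros x ->; apply polar_kbot. Qed.
Lemma polar_join_lub S : is_lub polar_le S (polar_join S).
Proof.
  split.
  - intros P HP x Hx; apply sub_biperp; eauto.
  - intros Q HQ x Hx; apply polar_closed; revert Hx; apply biperp_mono.
    intros w [P [HP Hw]]; apply (HQ P HP), Hw.
Qed.

Lemma polar_meet_join P S :
  polar_meet P (polar_join S) = polar_join (fun R => exists Q, S Q /\ R = polar_meet P Q).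
Proof.
  apply polar_ext; intro x; simpl; split.
  - intros [HPx Hx] y Hy.
    (* [x] is in the biperp of the union of [S], and [meet x y] is orthogonal to that union. *)
    assert (Hxy : perp (fun w => exists Q, S Q /\ Q w) (meet x y)).
    { intros w [Q [HQ Hw]].
      assert (Hyxw : meet y (meet x w) = bot).
      { apply Hy; exists (polar_meet P Q); split; [eauto|].
        split; [eapply polar_downward; [apply kmeet_lel | exact HPx]
               |eapply polar_downward; [apply kmeet_ler | exact Hw]]. }
      rewrite <- Hyxw; meet_eq. }
    rewrite <- (Hx _ Hxy); meet_eq.
  - intro Hx; split.
    + apply polar_closed; revert Hx; apply biperp_mono.
      intros w [R [[Q [_ ->]] [Hw _]]]; exact Hw.
    + revert Hx; apply biperp_mono.
      intros w [R [[Q [HQ ->]] [_ Hw]]]; eauto.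
Qed.

Lemma polar_compl_spec P :
  polar_meet P (polar_compl P) = polar_bot /\
  polar_join (fun R => R = P \/ R = polar_compl P) = polar_top.
Proof.
  split; apply polar_ext; intro x; simpl; split.
  - intros [Hx Hperp]; exact (perp_self Hx Hperp).
  - intros ->; split; [apply polar_kbot | apply perp_kbot].
  - intros _; exact I.
  - intros _ y Hy.
    assert (HyP : perp P y) by (intros w Hw; apply Hy; eauto).
    rewrite (perp_self (X := polar_compl P) HyP); [apply le_kbot_eq, kmeet_ler|].
    intros w Hw; apply Hy; eauto.
Qed.

Definition polar_frame : BFrame :=
  Build_BFrame polar_le_refl polar_le_trans polar_le_antisym polar_meet polar_meet_glb
    polar_top_max polar_bot_min polar_join polar_join_lub polar_meet_join
    (fun P => ex_intro _ (polar_compl P) (polar_compl_spec P)).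

Definition principal (a : L) : polar :=
  Polar (biperp (fun x => x = a)) (@biperp_closed _).

Lemma principal_self a : principal a a.
Proof. apply sub_biperp; reflexivity. Qed.

Lemma perp_principal a y : perp (principal a) y <-> meet y a = bot.
Proof. exact (iff_trans (perp_biperp _ y) (perp1 a y)). Qed.

Lemma principalP a x : principal a x <-> forall y, meet y a = bot -> meet x y = bot.
Proof. split; intros H y Hy; apply H, perp1, Hy. Qed.

Lemma principal_le_iff a b :
  polar_le (principal a) (principal b) <-> forall y, meet y b = bot -> meet y a = bot.
Proof.
  split.
  - intros H y Hy; apply perp_principal; apply perp_principal in Hy.
    revert Hy; apply perp_antimono, H.
  - intros H x; simpl; apply perp_antimono; intros y Hy; apply perp1, H, perp1, Hy.
Qed.

Lemma principal_le a b : le a b -> polar_le (principal a) (principal b).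
Proof.
  intro Hle; apply principal_le_iff; intros y Hy.
  eapply le_kbot_trans; [apply kmeet_monor, Hle | exact Hy].
Qed.

Lemma principal_le_d_reduced a b :
  d_reduced L -> polar_le (principal a) (principal b) -> le a b.
Proof.
  intros Hred Hab; rewrite principal_le_iff in Hab.
  assert (E : meet a b = a).
  { apply Hred; intro x; split; intro Hx.
    - assert (Hax : meet (meet a x) a = bot) by (apply Hab; rewrite <- Hx; meet_eq).
      rewrite <- Hax; meet_eq.
    - apply le_kbot_trans with (b := meet a x); [meet_le | exact Hx]. }
  rewrite <- E; apply kmeet_ler.
Qed.

Lemma principal_inj : d_reduced L -> injective_fun principal.
Proof.
  intros Hred a b E; apply kle_antisym; apply principal_le_d_reduced; auto;
    rewrite E; apply polar_le_refl.
Qed.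

Lemma principal_top : principal (ktop L) = polar_top.
Proof.
  apply polar_ext; intro x; simpl; split; [intros _; exact I|].
  intros _ y Hy; apply perp1 in Hy; rewrite kmeet_idPl in Hy by apply ktop_max.
  rewrite Hy; apply le_kbot_eq, kmeet_ler.
Qed.

Lemma principal_meet a b :
  principal (meet a b) = polar_meet (principal a) (principal b).
Proof.
  apply polar_ext; intro x.
  change (principal (meet a b) x <-> principal a x /\ principal b x).
  rewrite !principalP; split.
  - intro Hx; split; intros y Hy; apply Hx;
      [apply le_kbot_trans with (b := meet y a) | apply le_kbot_trans with (b := meet y b)];
      auto; meet_le.
  - intros [Ha Hb] y Hy.
    assert (Hxyb : meet x (meet y b) = bot) by (apply Ha; rewrite <- Hy; meet_eq).
    assert (Hxxy : meet x (meet x y) = bot) by (apply Hb; rewrite <- Hxyb; meet_eq).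
    rewrite <- Hxxy; meet_eq.
Qed.

Lemma perp_union_principal (T : L -> Prop) y :
  perp (fun x => exists P, (exists v, T v /\ P = principal v) /\ P x) y <-> perp T y.
Proof.
  split.
  - intros H v Hv; apply H; exists (principal v); split; [eauto | apply principal_self].
  - intros H w [P [[v [Hv ->]] Hw]]; apply (perp_principal v y); auto.
Qed.

Lemma principal_lub (T : L -> Prop) u :
  small K T -> is_lub le T u ->
  principal u = polar_join (fun P => exists v, T v /\ P = principal v).
Proof.
  intros HT Hu; apply polar_ext; apply biperp_ext; intro y.
  rewrite perp_union_principal, perp1, (lub_kbot_iff (kdistr L y HT Hu)).
  split.
  - intros H v Hv; apply H; eauto.
  - intros H s [v [Hv ->]]; apply H, Hv.
Qed.

Lemma polar_principal_join (P : polar) :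
  P = polar_join (fun Q => exists x, P x /\ Q = principal x).
Proof.
  apply polar_ext; intro x; simpl; transitivity (biperp P x).
  - split; [apply sub_biperp | apply polar_closed].
  - apply biperp_ext; intro y; symmetry; apply perp_union_principal.
Qed.

Lemma kideal_kbot (X : L -> Prop) : inhabited K -> is_kideal L X -> X bot.
Proof.
  intros HK [Hdown Hbound].
  destruct (Hbound _ (small_set0 L HK) (fun _ f => match f with end)) as [u [Hu _]].
  exact (Hdown _ _ (kbot_min L u) Hu).
Qed.

Lemma down_kideal a : is_kideal L (down L a).
Proof.
  split; [intros x y Hxy Hy; exact (kle_trans L _ _ _ Hxy Hy)|].
  intros S _ HS; exists a; split; [apply kle_refl | exact HS].
Qed.

Lemma down_meet_kbot_iff (X : L -> Prop) a : inhabited K -> is_kideal L X ->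
  seteq L (fun x => down L a x /\ X x) (down L bot) <-> perp X a.
Proof.
  intros HK HX; pose proof HX as [Hdown _]; split.
  - intros H x Hx; apply le_kbot_eq, H; split;
      [apply kmeet_lel | exact (Hdown _ _ (kmeet_ler _ _) Hx)].
  - intros H x; unfold down; split.
    + intros [Hxa Hx]; rewrite <- (H x Hx), kmeetC, kmeet_idPl by exact Hxa; apply kle_refl.
    + intro Hx; apply le_kbot_eq in Hx; subst x.
      split; [apply kbot_min | exact (kideal_kbot HK HX)].
Qed.

Lemma perp_down a x : perp (down L x) a <-> meet a x = bot.
Proof.
  split; [intro H; apply H, kle_refl|].
  intros H y Hy; eapply le_kbot_trans; [apply kmeet_monor, Hy | exact H].
Qed.

Lemma Drel_H_down a b : inhabited K -> Drel_H L (down L a) (down L b) <-> Drel L a b.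
Proof.
  intro HK; split.
  - intros H x; rewrite <- !perp_down.
    rewrite <- !(down_meet_kbot_iff _ HK (down_kideal x)); apply H, down_kideal.
  - intros H X HX; rewrite !(down_meet_kbot_iff _ HK HX).
    split; intros Hp x Hx; apply H, Hp, Hx.
Qed.

Lemma d_reduced_iff_g_injective : inhabited K -> d_reduced L <-> g_injective L.
Proof.
  intro HK; unfold d_reduced, g_injective.
  split; intros H a b;
    [rewrite Drel_H_down by exact HK | rewrite <- Drel_H_down by exact HK]; apply H.
Qed.

Lemma d_reduced_boolean_repr : d_reduced L -> boolean_repr L.
Proof.
  intro Hred.
  exists polar_frame, (fun P => exists a, principal a = P), principal.
  split; [|split; [|split; [|split]]].
  - split; [|split].
    + exists (ktop L); apply principal_top.
    + intros P Q [a <-] [b <-]; exists (meet a b); apply principal_meet.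
    + intros S HS HSM.
      set (T := fun v => S (principal v)).
      assert (HT : small K T) by exact (small_preimage (principal_inj Hred) HS).
      assert (ES : S = fun P => exists v, T v /\ P = principal v).
      { apply functional_extensionality; intro P; apply propositional_extensionality.
        split; [intro HP; destruct (HSM P HP) as [v <-]; eauto|].
        intros [v [Hv ->]]; exact Hv. }
      destruct (kjoin_ex L HT) as [u Hu].
      exists u; rewrite ES; exact (principal_lub HT Hu).
  - intro P; exists (fun Q => exists x, P x /\ Q = principal x).
    split; [intros Q [x [_ ->]]; eauto | apply polar_principal_join].
  - intro a; eauto.
  - intros P HP; exact HP.
  - intros a b; split; [apply principal_le | apply principal_le_d_reduced, Hred].
Qed.

End KFrameTheory.

Section BooleanFrame.
Variable B : BFrame.
Local Notation le := (ble B).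
Local Notation meet := (bmeet B).
Local Notation join := (bjoin B).

Lemma bmeet_lel a b : le (meet a b) a.
Proof. exact (proj1 (proj1 (bmeet_glb B a b _) (ble_refl B _))). Qed.
Lemma bmeet_ler a b : le (meet a b) b.
Proof. exact (proj2 (proj1 (bmeet_glb B a b _) (ble_refl B _))). Qed.
Lemma bjoin_ub (S : B -> Prop) s : S s -> le s (join S).
Proof. apply (bjoin_lub B S). Qed.
Lemma bjoin_least (S : B -> Prop) c : (forall s, S s -> le s c) -> le (join S) c.
Proof. apply (bjoin_lub B S). Qed.

Lemma bjoin_set0 : join (fun _ => False) = bbot B.
Proof. apply ble_antisym; [apply bjoin_least; intros s [] | apply bbot_min]. Qed.

Lemma ble_of_complement a b c :
  join (fun y => y = b \/ y = c) = btop B -> meet a c = bbot B -> le a b.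
Proof.
  intros Hbc Hac.
  assert (Ea : a = meet a (btop B)).
  { apply ble_antisym; [|apply bmeet_lel].
    apply bmeet_glb; split; [apply ble_refl | apply btop_max]. }
  rewrite Ea, <- Hbc, bdistr; apply bjoin_least.
  intros y [s [[-> | ->] ->]]; [apply bmeet_ler | rewrite Hac; apply bbot_min].
Qed.

End BooleanFrame.

Section BooleanRepresentation.
Variables (K : Type) (L : KFrame K) (B : BFrame) (M : B -> Prop) (f : L -> B).
Hypotheses (HMmeet : forall x y, M x -> M y -> M (bmeet B x y))
  (HMbot : M (bbot B)) (HMgen : join_generates B M)
  (Hf_range : forall a, M (f a)) (Hf_onto : forall y, M y -> exists a, f a = y)
  (Hf_le : forall a b, kle L a b <-> ble B (f a) (f b)).

Lemma repr_meet a b : f (kmeet L a b) = bmeet B (f a) (f b).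
Proof.
  destruct (Hf_onto (HMmeet (Hf_range a) (Hf_range b))) as [w Hw].
  assert (Ew : w = kmeet L a b); [|subst; exact Hw].
  apply kle_antisym.
  - apply kmeet_greatest; apply Hf_le; rewrite Hw; [apply bmeet_lel | apply bmeet_ler].
  - apply Hf_le; rewrite Hw; apply bmeet_glb; split; apply Hf_le;
      [apply kmeet_lel | apply kmeet_ler].
Qed.

Lemma repr_kbot : f (kbot L) = bbot B.
Proof.
  destruct (Hf_onto HMbot) as [w Hw].
  assert (Ew : w = kbot L); [|subst; exact Hw].
  apply le_kbot_eq, Hf_le; rewrite Hw; apply bbot_min.
Qed.

Lemma repr_kbot_iff a : a = kbot L <-> f a = bbot B.
Proof.
  rewrite <- repr_kbot; split; [intros ->; reflexivity|].
  intro E; apply kle_antisym; apply Hf_le; rewrite E; apply ble_refl.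
Qed.

Lemma repr_le_of_Drel a b : Drel L a b -> kle L a b.
Proof.
  intro Hab; apply Hf_le.
  destruct (bcompl B (f b)) as [c [Hbc Hbc_top]].
  destruct (HMgen c) as [S [HSM ->]].
  eapply ble_of_complement; [exact Hbc_top|].
  rewrite bdistr; apply ble_antisym; [|apply bbot_min].
  apply bjoin_least; intros y [s [Hs ->]].
  destruct (Hf_onto (HSM s Hs)) as [x <-].
  assert (Hbx : kmeet L b x = kbot L).
  { apply repr_kbot_iff; apply ble_antisym; [|apply bbot_min].
    rewrite repr_meet, <- Hbc; apply bmeet_glb; split;
      [apply bmeet_lel | eapply ble_trans; [apply bmeet_ler | apply bjoin_ub, Hs]]. }
  rewrite <- repr_meet, (proj2 (Hab x) Hbx), repr_kbot; apply ble_refl.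
Qed.

End BooleanRepresentation.

Lemma boolean_repr_d_reduced (K : Type) (L : KFrame K) :
  inhabited K -> boolean_repr L -> d_reduced L.
Proof.
  intros HK [B [M [f [[_ [HMmeet HMjoin]] [HMgen [Hf_range [Hf_onto Hf_le]]]]]]].
  assert (HMbot : M (bbot B)).
  { rewrite <- bjoin_set0; apply HMjoin; [apply small_set0, HK | intros s []]. }
  intros a b Hab; apply kle_antisym; eapply repr_le_of_Drel; eauto.
  intro x; symmetry; apply Hab.
Qed.

Theorem mainTheorem14 (K : Type) (hK : regular_card K) (L : KFrame K) :
  (d_reduced L <-> g_injective L) /\ (g_injective L <-> boolean_repr L).
Proof.
  pose proof (regular_card_inhabited hK) as HK.
  pose proof (d_reduced_iff_g_injective L HK) as Hdg.
  split; [exact Hdg|]; rewrite <- Hdg; split.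
  - apply d_reduced_boolean_repr.
  - apply boolean_repr_d_reduced, HK.
Qed.
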